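(* Let $A$ be a $K$-algebra with centre $Z(A)$ that admits a set of generators $\{a_i\mid i\in I\}$ such that, with $\Delta=\{\mathrm{ad}_{a_i}\mid i\in I\}\subseteq\mathrm{Der}_{Z(A)}(A)$, the algebra $A$ is $\Delta$-locally nilpotent. Then every nonzero ideal of $A$ has nonzero intersection with $Z(A)$.
   Context: $\mathrm{ad}_a(f)=af-fa$. For $i\ge1$, $\Delta^i=\{\delta_1\cdots\delta_i\mid\delta_j\in\Delta\}$; $N_\Delta(A)=\bigcup_{i\geq0}\{x\in A\mid\Delta^{i+1}x=0\}$. $A$ is $\Delta$-locally nilpotent if $A=N_\Delta(A)$. *)

From HB Require Import structures.
From mathcomp Require Import all_boot all_order all_algebra.
Set Implicit Arguments. Unset Strict Implicit. Unset Printing Implicit Defensive.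
Import GRing.Theory.
Local Open Scope ring_scope.

Definition ad (R : ringType) (a f : R) : R := a * f - f * a.

Definition central (R : ringType) (z : R) : Prop := forall y : R, z * y = y * z.

Definition generates_alg (K : comNzRingType) (A : algType K) (I : Type)
  (a : I -> A) : Prop :=
  forall S : {pred A}, subalg_closed S -> (forall i, a i \in S) ->
    forall x : A, x \in S.

(* Delta^{n+1} x = 0 with Delta = {ad_{a i} | i in I}: every composite
   ad_{a i_1} ... ad_{a i_{n+1}} kills x. *)
Definition iter_ad (R : ringType) (I : Type) (a : I -> R) (s : seq I) (x : R) : R :=
  foldr (fun i y => ad (a i) y) x s.

Definition ad_locally_nilpotent (R : ringType) (I : Type) (a : I -> R) : Prop :=
  forall x : R, exists n : nat, forall s : seq I, size s = n.+1 -> iter_ad a s x = 0.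

Definition is_ideal (R : ringType) (J : {pred R}) : Prop :=
  [/\ 0 \in J,
      (forall x y, x \in J -> y \in J -> x - y \in J),
      (forall r x, x \in J -> r * x \in J) &
      (forall r x, x \in J -> x * r \in J)].

(* If x is a nonzero element of J, apply the generators' inner derivations to x
   as long as the result stays nonzero.  Ideals are stable under every ad_a, and
   local nilpotence forces the process to stop after finitely many steps, at a
   nonzero element of J killed by every ad_{a i}.  Such an element commutes with
   all generators, hence with the whole algebra they generate. *)

From HB Require Import structures.
From mathcomp Require Import all_boot all_order all_algebra.
From Stdlib Require Import Classical.
Set Implicit Arguments. Unset Strict Implicit. Unset Printing Implicit Defensive.
Import GRing.Theory.
Local Open Scope ring_scope.

Lemma iter_ad_cat (R : nzRingType) (I : Type) (a : I -> R) (s t : seq I) (x : R) :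
  iter_ad a (s ++ t) x = iter_ad a s (iter_ad a t x).
Proof. exact: foldr_cat. Qed.

Lemma ideal_iter_ad (R : nzRingType) (I : Type) (a : I -> R) (J : {pred R})
  (s : seq I) (x : R) :
  is_ideal J -> x \in J -> iter_ad a s x \in J.
Proof.
case=> _ JB JL JR xJ; elim: s => [|i s IH] //=.
by rewrite /ad; apply: JB; [apply: JL | apply: JR].
Qed.

Lemma ad_nilpotent_last_nonzero (R : nzRingType) (I : Type) (a : I -> R)
  (n : nat) (x : R) :
  (forall s, size s = n.+1 -> iter_ad a s x = 0) -> x != 0 ->
  exists s, iter_ad a s x != 0 /\ forall i, ad (a i) (iter_ad a s x) = 0.
Proof.
elim: n x => [|n IH] x hnil x0.
  by exists [::]; split=> // i; exact: (hnil [:: i]).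
have [killed | /not_all_ex_not [i /eqP hi]] := classic (forall i, ad (a i) x = 0).
  by exists [::].
have [|s [s0 skilled]] := IH (ad (a i) x) _ hi.
  move=> s hs; rewrite -[ad _ _]/(iter_ad a [:: i] x) -iter_ad_cat.
  by rewrite hnil // size_cat hs addn1.
by exists (s ++ [:: i]); rewrite iter_ad_cat.
Qed.

Lemma central_of_ad_gens_eq0 (K : comNzRingType) (A : algType K) (I : Type)
  (a : I -> A) (x : A) :
  generates_alg a -> (forall i, ad (a i) x = 0) -> central x.
Proof.
move=> hgen killed.
pose C : {pred A} := [pred y | x * y == y * x].
have C_subalg : subalg_closed C.
  split.
  - by rewrite inE mul1r mulr1.
  - move=> k u v; rewrite !inE => /eqP hu /eqP hv.
    by rewrite mulrDl mulrDr -scalerAl -scalerAr hu hv.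
  - move=> u v; rewrite !inE => /eqP hu /eqP hv.
    by rewrite mulrA hu -mulrA hv mulrA.
have C_gens i : a i \in C by rewrite inE eq_sym -subr_eq0 [_ - _]killed.
by move=> y; apply/eqP; exact: hgen C C_subalg C_gens y.
Qed.

Theorem corollary1p9 (K : comNzRingType) (A : algType K) (I : Type) (a : I -> A)
  (hgen : generates_alg a) (hnil : ad_locally_nilpotent a)
  (J : {pred A}) (hJ : is_ideal J) (hJ0 : exists x, x \in J /\ x != 0) :
  exists z : A, [/\ z \in J, z != 0 & central z].
Proof.
case: hJ0 => x [xJ x0]; case: (hnil x) => n hn.
have [s [s0 skilled]] := ad_nilpotent_last_nonzero hn x0.
exists (iter_ad a s x); split=> //; first exact: ideal_iter_ad.
exact: central_of_ad_gens_eq0 hgen skilled.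
Qed.
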